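(* For all types $A$, $B$, $C$: if $A \equiv C$ and $C \sim B$, then $A \simeq B$.
   Context: Types and rows share one grammar: $A,B,C,\rho ::= X \mid \alpha \mid \star \mid \iota \mid A\to B \mid \forall X{:}K.\,A \mid [\rho] \mid \langle\rho\rangle \mid \cdot \mid \ell{:}A;\rho$, where $X$ ranges over type variables (bound by $\forall$), $\alpha$ over type names, $\star$ is the dynamic type (also serving as the dynamic row), $\iota$ over base types, $[\rho]$ and $\langle\rho\rangle$ are record and variant types, $\cdot$ is the empty row, $\ell$ ranges over labels, and $K\in\{\mathsf T,\mathsf R\}$ is a kind. Types are identified up to renaming of bound variables; $\mathit{ftv}(A)$ is the set of free type variables. Row matching $\rho \triangleright_\ell A,\rho'$ is defined by: $(\ell{:}A;\rho)\triangleright_\ell A,\rho$; if $\ell'\neq\ell$ and $\rho\triangleright_\ell A,\rho'$ then $(\ell'{:}B;\rho)\triangleright_\ell A,(\ell'{:}B;\rho')$; and $\star\triangleright_\ell \star,\star$. $\mathbf{QPoly}(A)$ holds iff $A$ is not of the form $\forall X{:}K.\,B$ and $\star$ occurs in $A$. Row concatenation $\rho_1\odot\rho_2$ is defined only when $\rho_1=\ell_1{:}A_1;\dots;\ell_n{:}A_n;\cdot$, and then equals $\ell_1{:}A_1;\dots;\ell_n{:}A_n;\rho_2$. $\mathit{dom}(\rho)$ is the set of labels in the top-level label prefix of $\rho$. A row $\rho$ ends with $\star$ if $\rho=\rho'\odot\star$ for some $\rho'$. Type equivalence $\equiv$ is the least equivalence relation that is a congruence for $\to$, $\forall X{:}K.\,-$,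 $[-]$, $\langle-\rangle$ and $\ell{:}-;-$, and contains $\ell{:}A;\ell'{:}B;\rho \equiv \ell'{:}B;\ell{:}A;\rho$ whenever $\ell\neq\ell'$. Consistency $\simeq$ is defined inductively: $A\simeq A$; $\star\simeq A$; $A\simeq\star$; $A_1\to A_2\simeq B_1\to B_2$ if $A_1\simeq B_1$ and $A_2\simeq B_2$; $\forall X{:}K.A\simeq\forall X{:}K.B$ if $A\simeq B$; $\forall X{:}K.A\simeq B$ if $\mathbf{QPoly}(B)$, $X\notin\mathit{ftv}(B)$ and $A\simeq B$; $A\simeq\forall X{:}K.B$ if $\mathbf{QPoly}(A)$, $X\notin\mathit{ftv}(A)$ and $A\simeq B$; $[\rho_1]\simeq[\rho_2]$ and $\langle\rho_1\rangle\simeq\langle\rho_2\rangle$ if $\rho_1\simeq\rho_2$; $\ell{:}A;\rho_1\simeq B$ if $B\triangleright_\ell B',\rho_2$, $A\simeq B'$ and $\rho_1\simeq\rho_2$; $A\simeq \ell{:}B;\rho_2$ if $A\triangleright_\ell A',\rho_1$, $A'\simeq B$ and $\rho_1\simeq\rho_2$. The relation $\sim$ is defined inductively by the same rules as $\simeq$ for reflexivity, $\star$ on either side, $\to$, $\forall$ (all three $\forall$ rules, with $\sim$ in place of $\simeq$), records and variants, together with: $\ell{:}A;\rho_1\sim\ell{:}B;\rho_2$ if $A\sim B$ and $\rho_1\sim\rho_2$; $\ell{:}A;\rho_1\sim\rho_2$ if $\ell\notin\mathit{dom}(\rho_2)$, $\rho_2$ ends with $\star$ and $\rho_1\sim\rho_2$;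 $\rho_1\sim\ell{:}B;\rho_2$ if $\ell\notin\mathit{dom}(\rho_1)$, $\rho_1$ ends with $\star$ and $\rho_1\sim\rho_2$. *)

(* Types/rows with de Bruijn indices for forall-bound type
   variables (so types are identified up to alpha-renaming). *)
From Stdlib Require Import List Arith.
Import ListNotations.

Definition label := nat.
Definition tyname := nat.
Definition basety := nat.

Inductive kind : Type := KT | KR.

Inductive ty : Type :=
  | TVar  : nat -> ty
  | TName : tyname -> ty
  | TDyn  : ty                   (* star: dynamic type / dynamic row *)
  | TBase : basety -> ty
  | TArr  : ty -> ty -> ty
  | TAll  : kind -> ty -> ty     (* forall X:K. A  (X = index 0 in body) *)
  | TRec  : ty -> ty
  | TVariant : ty -> ty
  | TNil  : ty
  | TLab  : label -> ty -> ty -> ty.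

Fixpoint lift (c : nat) (A : ty) : ty :=
  match A with
  | TVar n => if Nat.ltb n c then TVar n else TVar (S n)
  | TName a => TName a
  | TDyn => TDyn
  | TBase i => TBase i
  | TArr A B => TArr (lift c A) (lift c B)
  | TAll K A => TAll K (lift (S c) A)
  | TRec r => TRec (lift c r)
  | TVariant r => TVariant (lift c r)
  | TNil => TNil
  | TLab l A r => TLab l (lift c A) (lift c r)
  end.

Inductive row_match : ty -> label -> ty -> ty -> Prop :=
  | RM_head : forall l A rho, row_match (TLab l A rho) l A rho
  | RM_skip : forall l l' A B rho rho', l' <> l -> row_match rho l A rho' ->
      row_match (TLab l' B rho) l A (TLab l' B rho')
  | RM_dyn  : forall l, row_match TDyn l TDyn TDyn.

Fixpoint star_occurs (A : ty) : bool :=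
  match A with
  | TDyn => true
  | TArr A B => star_occurs A || star_occurs B
  | TAll _ A => star_occurs A
  | TRec r | TVariant r => star_occurs r
  | TLab _ A r => star_occurs A || star_occurs r
  | _ => false
  end.

Definition is_forall (A : ty) : Prop :=
  match A with TAll _ _ => True | _ => False end.

Definition QPoly (A : ty) : Prop := ~ is_forall A /\ star_occurs A = true.

(* rho1 (.) rho2 where rho1 = l1:A1;...;ln:An;. is given by its label list *)
Fixpoint row_concat (ls : list (label * ty)) (rho2 : ty) : ty :=
  match ls with
  | [] => rho2
  | (l, A) :: ls' => TLab l A (row_concat ls' rho2)
  end.

Definition ends_with_star (rho : ty) : Prop :=
  exists ls, rho = row_concat ls TDyn.

Fixpoint dom (rho : ty) : list label :=
  match rho with
  | TLab l _ r => l :: dom r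
  | _ => []
  end.

Inductive ty_equiv : ty -> ty -> Prop :=
  | TE_refl : forall A, ty_equiv A A
  | TE_sym : forall A B, ty_equiv A B -> ty_equiv B A
  | TE_trans : forall A B C, ty_equiv A B -> ty_equiv B C -> ty_equiv A C
  | TE_arr : forall A1 A2 B1 B2, ty_equiv A1 B1 -> ty_equiv A2 B2 ->
      ty_equiv (TArr A1 A2) (TArr B1 B2)
  | TE_all : forall K A B, ty_equiv A B -> ty_equiv (TAll K A) (TAll K B)
  | TE_rec : forall r1 r2, ty_equiv r1 r2 -> ty_equiv (TRec r1) (TRec r2)
  | TE_variant : forall r1 r2, ty_equiv r1 r2 ->
      ty_equiv (TVariant r1) (TVariant r2)
  | TE_lab : forall l A B r1 r2, ty_equiv A B -> ty_equiv r1 r2 ->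
      ty_equiv (TLab l A r1) (TLab l B r2)
  | TE_swap : forall l l' A B rho, l <> l' ->
      ty_equiv (TLab l A (TLab l' B rho)) (TLab l' B (TLab l A rho)).

(* Consistency (the "X notin ftv(B)" side condition is rendered by lifting
   B under the binder) *)
Inductive consistent : ty -> ty -> Prop :=
  | C_refl : forall A, consistent A A
  | C_dynL : forall A, consistent TDyn A
  | C_dynR : forall A, consistent A TDyn
  | C_arr : forall A1 A2 B1 B2, consistent A1 B1 -> consistent A2 B2 ->
      consistent (TArr A1 A2) (TArr B1 B2)
  | C_all : forall K A B, consistent A B -> consistent (TAll K A) (TAll K B)
  | C_allL : forall K A B, QPoly B -> consistent A (lift 0 B) ->
      consistent (TAll K A) B
  | C_allR : forall K A B, QPoly A -> consistent (lift 0 A) B ->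
      consistent A (TAll K B)
  | C_rec : forall r1 r2, consistent r1 r2 -> consistent (TRec r1) (TRec r2)
  | C_variant : forall r1 r2, consistent r1 r2 ->
      consistent (TVariant r1) (TVariant r2)
  | C_labL : forall l A rho1 B B' rho2, row_match B l B' rho2 ->
      consistent A B' -> consistent rho1 rho2 -> consistent (TLab l A rho1) B
  | C_labR : forall l A A' rho1 B rho2, row_match A l A' rho1 ->
      consistent A' B -> consistent rho1 rho2 -> consistent A (TLab l B rho2).

Inductive sim : ty -> ty -> Prop :=
  | S_refl : forall A, sim A A
  | S_dynL : forall A, sim TDyn A
  | S_dynR : forall A, sim A TDyn
  | S_arr : forall A1 A2 B1 B2, sim A1 B1 -> sim A2 B2 ->
      sim (TArr A1 A2) (TArr B1 B2)
  | S_all : forall K A B, sim A B -> sim (TAll K A) (TAll K B)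
  | S_allL : forall K A B, QPoly B -> sim A (lift 0 B) -> sim (TAll K A) B
  | S_allR : forall K A B, QPoly A -> sim (lift 0 A) B -> sim A (TAll K B)
  | S_rec : forall r1 r2, sim r1 r2 -> sim (TRec r1) (TRec r2)
  | S_variant : forall r1 r2, sim r1 r2 -> sim (TVariant r1) (TVariant r2)
  | S_lab : forall l A B rho1 rho2, sim A B -> sim rho1 rho2 ->
      sim (TLab l A rho1) (TLab l B rho2)
  | S_labL : forall l A rho1 rho2, ~ In l (dom rho2) -> ends_with_star rho2 ->
      sim rho1 rho2 -> sim (TLab l A rho1) rho2
  | S_labR : forall l B rho1 rho2, ~ In l (dom rho1) -> ends_with_star rho1 ->
      sim rho1 rho2 -> sim rho1 (TLab l B rho2).

(* Every rule of ~ is an instance of a rule of consistency: the two extra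
   label rules of ~ match a label absent from a row ending with a star
   against a star.  So C ~ B gives C ≃ B, and it remains to see that
   consistency is invariant under type equivalence on both sides.
   Equivalence preserves head constructors, occurrences of the star and
   lifting, and transports row matchings up to equivalence.  The one
   obstacle is that the label rules of ≃ need a literal label at the head of
   a type; it is removed by the generalized label rule
     A ▷_l A',ρ  and  B ▷_l B',ρ'  and  A' ≃ B'  and  ρ ≃ ρ'  imply  A ≃ B,
   proved by induction on sizes from the fact that row matchings on two
   distinct labels commute. *)
From Stdlib Require Import List Wf_nat Lia.

Fixpoint ty_size (A : ty) : nat :=
  match A with
  | TArr A B => S (ty_size A + ty_size B)
  | TAll _ A => S (ty_size A)
  | TRec r | TVariant r => S (ty_size r)
  | TLab _ A r => S (ty_size A + ty_size r)
  | _ => 1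
  end.

(* Labelled rows only keep their shape: [TE_swap] may change the head label. *)
Definition equiv_head (A B : ty) : Prop :=
  match A, B with
  | TArr A1 A2, TArr B1 B2 => ty_equiv A1 B1 /\ ty_equiv A2 B2
  | TAll K A, TAll K' B => K = K' /\ ty_equiv A B
  | TRec r1, TRec r2 => ty_equiv r1 r2
  | TVariant r1, TVariant r2 => ty_equiv r1 r2
  | TLab _ _ _, TLab _ _ _ => True
  | _, _ => A = B
  end.

Lemma ty_equiv_head A B : ty_equiv A B -> equiv_head A B.
Proof.
  induction 1; simpl; auto.
  - destruct A; simpl; auto using TE_refl.
  - destruct A, B; simpl in *; intuition (try congruence; eauto using TE_sym).
  - destruct A, B; simpl in *; try discriminate; try contradiction;
      destruct C; simpl in *; try discriminate; try contradiction;
      intuition (try congruence; eauto using TE_trans).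
Qed.

Ltac invert_head H X :=
  let Hd := fresh "Hd" in
  pose proof (ty_equiv_head _ _ H) as Hd;
  destruct X; simpl in Hd; try discriminate; try contradiction.

Lemma ty_equiv_dyn A : ty_equiv A TDyn -> A = TDyn.
Proof. intros H; invert_head H A; reflexivity. Qed.

Lemma ty_equiv_star_occurs A B : ty_equiv A B -> star_occurs A = star_occurs B.
Proof.
  induction 1; simpl; try congruence.
  destruct (star_occurs A), (star_occurs B), (star_occurs rho); reflexivity.
Qed.

Lemma ty_equiv_QPoly A B : ty_equiv A B -> QPoly B -> QPoly A.
Proof.
  intros H [Hnall Hstar]; split.
  - pose proof (ty_equiv_head _ _ H) as Hd; destruct A, B; simpl in *; congruence || tauto.
  - rewrite (ty_equiv_star_occurs _ _ H); exact Hstar.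
Qed.

Lemma ty_equiv_lift A B c : ty_equiv A B -> ty_equiv (lift c A) (lift c B).
Proof.
  intros H; revert c; induction H; intros c; simpl;
    try solve [constructor; auto]; eauto using TE_trans.
Qed.

Lemma row_match_size A l A' rA : row_match A l A' rA -> ty_size rA <= ty_size A.
Proof. induction 1; simpl; lia. Qed.

Lemma row_match_commute A l A' rA m M rAM :
  row_match A l A' rA -> l <> m -> row_match rA m M rAM ->
  exists rM, row_match A m M rM /\ row_match rM l A' rAM.
Proof.
  intros HA; revert m M rAM; induction HA; intros m M rAM Hlm HrA.
  - exists (TLab l A rAM); split; constructor; auto.
  - inversion HrA; subst.
    + exists rho; split; [constructor | assumption].
    + destruct (IHHA m M rho'0 Hlm ltac:(assumption)) as (rM & H1 & H2).
      exists (TLab l' B rM); split; constructor; auto.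
  - inversion HrA; subst; exists TDyn; split; constructor.
Qed.

Lemma row_match_concat_star ls l :
  ~ In l (dom (row_concat ls TDyn)) ->
  row_match (row_concat ls TDyn) l TDyn (row_concat ls TDyn).
Proof.
  induction ls as [|[m X] ls IH]; simpl; intros Hl.
  - constructor.
  - constructor; auto.
Qed.

Definition reflects_row_match (B A : ty) : Prop :=
  forall l A' rA, row_match A l A' rA ->
  exists B' rB, row_match B l B' rB /\ ty_equiv B' A' /\ ty_equiv rB rA.

Lemma reflects_row_match_refl A : reflects_row_match A A.
Proof. intros l A' rA H; exists A', rA; auto using TE_refl. Qed.

Lemma reflects_row_match_trans A B C :
  reflects_row_match A B -> reflects_row_match B C -> reflects_row_match A C.
Proof.
  intros HAB HBC l C' rC HC.
  destruct (HBC _ _ _ HC) as (B' & rB & HB & HB' & HrB).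
  destruct (HAB _ _ _ HB) as (A' & rA & HA & HA' & HrA).
  exists A', rA; eauto using TE_trans.
Qed.

Lemma reflects_row_match_lab l A B r1 r2 :
  ty_equiv A B -> ty_equiv r1 r2 -> reflects_row_match r1 r2 ->
  reflects_row_match (TLab l A r1) (TLab l B r2).
Proof.
  intros HAB Hr12 Hr m M rM HM; inversion HM; subst.
  - exists A, r1; auto using RM_head.
  - match goal with H : row_match r2 m M _ |- _ =>
      destruct (Hr _ _ _ H) as (A' & r1' & H1 & H2 & H3) end.
    exists A', (TLab l A r1'); repeat split; auto using RM_skip, TE_lab.
Qed.

Lemma reflects_row_match_swap l l' A B rho : l <> l' ->
  reflects_row_match (TLab l A (TLab l' B rho)) (TLab l' B (TLab l A rho)).
Proof.
  intros Hll' m M rM HM; inversion HM as [| ? ? ? ? ? ? Hm HM' |]; subst.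
  - do 2 eexists; split; [apply RM_skip; [congruence | apply RM_head] |].
    split; apply TE_refl.
  - inversion HM' as [| ? ? ? ? ? ? Hm' HM'' |]; subst.
    + do 2 eexists; split; [apply RM_head | split; apply TE_refl].
    + do 2 eexists; split; [apply RM_skip, RM_skip; [congruence | congruence | exact HM''] |].
      split; [apply TE_refl | apply TE_swap; congruence].
Qed.

Lemma ty_equiv_reflects_row_match A B :
  ty_equiv A B -> reflects_row_match A B /\ reflects_row_match B A.
Proof.
  induction 1 as [A | | A B C _ [] _ [] | | | | | l A B r1 r2 HAB _ Hr12 [] | ];
    try solve [split; intros ? ? ? Hm; inversion Hm].
  - split; apply reflects_row_match_refl.
  - tauto.
  - split; eapply reflects_row_match_trans; eassumption.
  - split; apply reflects_row_match_lab; auto using TE_sym.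
  - split; apply reflects_row_match_swap; congruence.
Qed.

Lemma consistent_lab_inv l A rA m B rB :
  consistent (TLab l A rA) (TLab m B rB) ->
  (exists B' rB', row_match (TLab m B rB) l B' rB' /\
                  consistent A B' /\ consistent rA rB') \/
  (exists A' rA', row_match (TLab l A rA) m A' rA' /\
                  consistent A' B /\ consistent rA' rB).
Proof.
  intros H; inversion H; subst.
  - left; exists B, rB; auto using RM_head, C_refl.
  - left; eauto.
  - right; eauto.
Qed.

Lemma consistent_of_row_match A B l A' rA B' rB :
  row_match A l A' rA -> row_match B l B' rB ->
  consistent A' B' -> consistent rA rB -> consistent A B.
Proof.
  remember (ty_size A + ty_size B) as k eqn:Hk.
  revert A B rA rB Hk; induction k as [k IH] using (well_founded_induction lt_wf).
  intros A B rA rB -> HA HB HAB Hr.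
  pose proof HA as HA0; pose proof HB as HB0.
  destruct HA as [| ? m ? Y s s' Hml Hs | ]; [eapply C_labL; eassumption | | apply C_dynL].
  destruct HB as [| ? n ? Z t t' Hnl Ht | ]; [eapply C_labR; eassumption | | apply C_dynR].
  pose proof (row_match_size _ _ _ _ Hs); pose proof (row_match_size _ _ _ _ Ht).
  destruct (consistent_lab_inv _ _ _ _ _ _ Hr)
    as [(Z' & t3 & Hm & HYZ & Hst) | (Y' & s3 & Hn & HYZ & Hst)].
  - destruct (row_match_commute _ _ _ _ _ _ _ HB0 (not_eq_sym Hml) Hm)
      as (t4 & Hm4 & Hl4).
    pose proof (row_match_size _ _ _ _ Hm4); simpl in *.
    eapply C_labL; [exact Hm4 | exact HYZ |].
    eapply (IH (ty_size s + ty_size t4)); eauto; simpl; lia.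
  - destruct (row_match_commute _ _ _ _ _ _ _ HA0 (not_eq_sym Hnl) Hn)
      as (s4 & Hn4 & Hl4).
    pose proof (row_match_size _ _ _ _ Hn4); simpl in *.
    eapply C_labR; [exact Hn4 | exact HYZ |].
    eapply (IH (ty_size s4 + ty_size t)); eauto; simpl; lia.
Qed.

Lemma ty_equiv_consistent A B : ty_equiv A B -> consistent A B.
Proof.
  revert B; induction A; intros B H; try (invert_head H B; try rewrite Hd; apply C_refl).
  - invert_head H B; destruct Hd; apply C_arr; auto.
  - invert_head H B; destruct Hd; subst; apply C_all; auto.
  - invert_head H B; apply C_rec; auto.
  - invert_head H B; apply C_variant; auto.
  - destruct (proj1 (ty_equiv_reflects_row_match _ _ (TE_sym _ _ H)) _ _ _ (RM_head l A1 A2))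
      as (B' & rB & HB & HB' & HrB).
    eapply C_labL; eauto using TE_sym.
Qed.

Lemma consistent_ty_equiv A B C D :
  consistent C D -> ty_equiv A C -> ty_equiv B D -> consistent A B.
Proof.
  intros HCD; revert A B; induction HCD; intros A0 B0 HA HB.
  - apply ty_equiv_consistent; eauto using TE_trans, TE_sym.
  - rewrite (ty_equiv_dyn _ HA); apply C_dynL.
  - rewrite (ty_equiv_dyn _ HB); apply C_dynR.
  - invert_head HA A0; invert_head HB B0; destruct Hd, Hd0; apply C_arr; auto.
  - invert_head HA A0; invert_head HB B0; destruct Hd, Hd0; subst; apply C_all; auto.
  - invert_head HA A0; destruct Hd; subst.
    apply C_allL; eauto using ty_equiv_QPoly, ty_equiv_lift.
  - invert_head HB B0; destruct Hd; subst.
    apply C_allR; eauto using ty_equiv_QPoly, ty_equiv_lift.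
  - invert_head HA A0; invert_head HB B0; apply C_rec; auto.
  - invert_head HA A0; invert_head HB B0; apply C_variant; auto.
  - destruct (proj1 (ty_equiv_reflects_row_match _ _ HA) _ _ _ (RM_head l A rho1))
      as (A' & rA & HA' & ? & ?).
    destruct (proj1 (ty_equiv_reflects_row_match _ _ HB) _ _ _ H)
      as (B'' & rB & HB' & ? & ?).
    eapply consistent_of_row_match; eauto.
  - destruct (proj1 (ty_equiv_reflects_row_match _ _ HA) _ _ _ H)
      as (A'' & rA & HA' & ? & ?).
    destruct (proj1 (ty_equiv_reflects_row_match _ _ HB) _ _ _ (RM_head l B rho2))
      as (B' & rB & HB' & ? & ?).
    eapply consistent_of_row_match; eauto.
Qed.

Lemma sim_consistent A B : sim A B -> consistent A B.
Proof.
  induction 1; try solve [constructor; auto].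
  - eapply C_labL; [apply RM_head | assumption | assumption].
  - destruct H0 as [ls ->].
    eapply C_labL; [apply row_match_concat_star; assumption | apply C_dynR | assumption].
  - destruct H0 as [ls ->].
    eapply C_labR; [apply row_match_concat_star; assumption | apply C_dynL | assumption].
Qed.

Theorem mainTheorem3 : forall A B C : ty,
  ty_equiv A C -> sim C B -> consistent A B.
Proof.
  intros A B C HAC HCB.
  exact (consistent_ty_equiv A B C B (sim_consistent C B HCB) HAC (TE_refl B)).
Qed.
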